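(* There is a set $E$ of natural numbers with $|\{n\in E: n\le x\}| = o(x/\log x)$ as $x\to\infty$ such that, for $n\notin E$, $$ \sum_{m\ge 2}\frac1m\sum_{\substack{q \text{ prime}\\ q^m\equiv \pm1 \ (\mathrm{mod}\ n)}}\frac{1}{q^m} = o\left(\frac1n\right) \quad (n\to\infty). $$
   Context: The inner sum runs over primes $q$ with $q^m\equiv 1$ or $q^m\equiv -1 \pmod n$. *)

From Stdlib Require Import Reals ZArith Znumtheory List Arith.
From Coquelicot Require Import Coquelicot.
Open Scope R_scope.

Definition pm1_mod (n q m : nat) : bool :=
  (Z.eqb (Z.modulo (Z.of_nat q ^ Z.of_nat m - 1) (Z.of_nat n)) 0
   || Z.eqb (Z.modulo (Z.of_nat q ^ Z.of_nat m + 1) (Z.of_nat n)) 0)%bool.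

Definition inner_term (n m q : nat) : R :=
  if prime_dec (Z.of_nat q) then
    (if pm1_mod n q m then / (INR q ^ m) else 0)
  else 0.

Definition Ssum (n : nat) : R :=
  Series (fun m : nat =>
    if (m <? 2)%nat then 0 else / INR m * Series (fun q : nat => inner_term n m q)).

Definition count_upto (E : nat -> bool) (N : nat) : nat :=
  length (filter E (seq 0 (S N))).

From Stdlib Require Import Reals ZArith Znumtheory List Lra Lia.
From Coquelicot Require Import Coquelicot.
From mathcomp Require all_boot zify.
Open Scope R_scope.

(* Write f(n) for the double sum.  Interchanging summations,
   sum_{n <= N} n f(n) <= sum_{m >= 2} sum_q q^-m sum_{n <= N, n | q^m -+ 1} n.
   A divisor n <= N of k is at most N^(35/36) k^(1/36), and k has at most
   560^(1/9) k^(4/9) divisors; since k <= 2 q^m, the (m, q) term is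
   O(N^(35/36) q^(-19m/36)), which is summable over q, m >= 2.  Hence
   sum_{n <= N} n f(n) = O(N^(35/36)).  For E = {n : n f(n) > n^(-1/72)},
   Markov's inequality gives |E /\ [0, N]| = O(N^(71/72)) = o(N / log N),
   while n f(n) <= n^(-1/72) -> 0 off E. *)

Lemma count_upto_S (E : nat -> bool) N :
  count_upto E (S N) = (count_upto E N + (if E (S N) then 1 else 0))%nat.
Proof.
  unfold count_upto. rewrite (seq_S (S N) 0), filter_app, length_app.
  simpl. destruct (E (S N)); simpl; lia.
Qed.

Lemma count_upto_le_sum (E : nat -> bool) (h : nat -> R) N :
  (forall n, 0 <= h n) -> (forall n, (n <= N)%nat -> E n = true -> 1 <= h n) ->
  INR (count_upto E N) <= sum_f_R0 h N.
Proof.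
  intros h_ge0 h_ge1. induction N as [|N IH].
  - unfold count_upto; simpl.
    destruct (E 0%nat) eqn:E0; simpl; [apply h_ge1 | apply h_ge0]; auto.
  - rewrite count_upto_S, plus_INR, tech5. apply Rplus_le_compat.
    + apply IH. intros n n_le. apply h_ge1. lia.
    + destruct (E (S N)) eqn:ES; simpl; [apply h_ge1 | apply h_ge0]; auto.
Qed.

Lemma sum_indicator_le_count (P : nat -> bool) (g : nat -> R) B N :
  0 <= B -> (forall n, (n <= N)%nat -> P n = true -> g n <= B) ->
  sum_f_R0 (fun n => if P n then g n else 0) N <= B * INR (count_upto P N).
Proof.
  intros B_ge0 g_le. induction N as [|N IH].
  - unfold count_upto; simpl.
    destruct (P 0%nat) eqn:P0; simpl; [rewrite Rmult_1_r; auto | lra].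
  - rewrite count_upto_S, plus_INR, tech5, Rmult_plus_distr_l. apply Rplus_le_compat.
    + apply IH. intros n n_le. apply g_le. lia.
    + destruct (P (S N)) eqn:PS; simpl; [rewrite Rmult_1_r; auto | lra].
Qed.

Lemma ln_le_sub1 y : 0 < y -> ln y <= y - 1.
Proof. intros y_pos. pose proof (exp_ineq1_le (ln y)) as H. rewrite exp_ln in H; lra. Qed.

Lemma Rpower_gt0 x y : 0 < Rpower x y.
Proof. apply exp_pos. Qed.

Lemma ln_le_Rpower e x : 0 < e -> 0 < x -> ln x <= Rpower x e / e.
Proof.
  intros e_pos x_pos. pose proof (ln_le_sub1 _ (Rpower_gt0 x e)) as H.
  rewrite ln_Rpower in H. apply Rmult_le_reg_l with e; [lra|].
  replace (e * (Rpower x e / e)) with (Rpower x e) by (field; lra). lra.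
Qed.

Lemma Rpower_neg_lt e eps x : 0 < e -> 0 < eps -> exp (- ln eps / e) < x ->
  Rpower x (- e) < eps.
Proof.
  intros e_pos eps_pos x_big. unfold Rpower. rewrite <- (exp_ln eps) by lra.
  apply exp_increasing.
  assert (H : - ln eps / e < ln x).
  { rewrite <- (ln_exp (- ln eps / e)). apply ln_increasing; [apply exp_pos | exact x_big]. }
  apply Rmult_lt_compat_l with (r := e) in H; [|lra].
  replace (e * (- ln eps / e)) with (- ln eps) in H by (field; lra). lra.
Qed.

Lemma le_Rpower_interp x y z a : 0 < x -> x <= y -> x <= z -> 0 <= a <= 1 ->
  x <= Rpower y a * Rpower z (1 - a).
Proof.
  intros x_pos xy xz a_bnd. rewrite <- (Rpower_1 x) at 1 by exact x_pos.
  replace 1 with (a + (1 - a)) at 1 by ring. rewrite Rpower_plus.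
  apply Rmult_le_compat; try (left; apply Rpower_gt0); apply Rle_Rpower_l; lra.
Qed.

Lemma Rinv_INR_bounds m : (1 <= m)%nat -> 0 < / INR m <= 1.
Proof.
  intros m_ge1. apply le_INR in m_ge1. simpl in m_ge1.
  split; [apply Rinv_0_lt_compat; lra|]. rewrite <- Rinv_1. apply Rinv_le_contravar; lra.
Qed.

Lemma INR_Int_part x : 0 <= x -> INR (Z.to_nat (Int_part x)) = IZR (Int_part x).
Proof.
  intros x_ge0. destruct (base_Int_part x) as [H1 H2].
  assert (0 <= Int_part x)%Z by (assert (-1 < Int_part x)%Z by (apply lt_IZR; lra); lia).
  rewrite INR_IZR_INZ, Z2Nat.id; auto.
Qed.

Lemma Series_ge0 (a : nat -> R) : (forall n, 0 <= a n) -> ex_series a -> 0 <= Series a.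
Proof.
  intros a_ge0 a_ex.
  assert (zero : Series (fun _ => 0) = 0).
  { rewrite (Series_ext _ (fun _ => 0 * 0)) by (intros; ring). rewrite Series_scal_l. ring. }
  rewrite <- zero. apply Series_le; auto. intros n. split; [lra | auto].
Qed.

Lemma ex_series_le_ge0 (a b : nat -> R) :
  (forall n, 0 <= a n <= b n) -> ex_series b -> ex_series a.
Proof.
  intros ab b_ex. apply (@ex_series_le R_AbsRing R_CompleteNormedModule _ b); auto.
  intros n. destruct (ab n). unfold norm; simpl; unfold abs; simpl.
  rewrite Rabs_pos_eq; lra.
Qed.

Lemma ex_series_Rmult_l c (a : nat -> R) : ex_series a -> ex_series (fun n => c * a n).
Proof.
  intros a_ex. apply (ex_series_ext (fun n => a n * c)); [intros; apply Rmult_comm|].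
  apply ex_series_scal_r, a_ex.
Qed.

Lemma ex_series_sum (a : nat -> nat -> R) N :
  (forall n, ex_series (a n)) -> ex_series (fun m => sum_f_R0 (fun n => a n m) N).
Proof.
  intros a_ex. induction N as [|N IH]; [apply a_ex|].
  apply (ex_series_ext (fun m => plus (sum_f_R0 (fun n => a n m) N) (a (S N) m))); [reflexivity|].
  apply (@ex_series_plus R_AbsRing R_NormedModule); auto.
Qed.

Lemma sum_Series (a : nat -> nat -> R) N : (forall n, ex_series (a n)) ->
  sum_f_R0 (fun n => Series (a n)) N = Series (fun m => sum_f_R0 (fun n => a n m) N).
Proof.
  intros a_ex. induction N as [|N IH]; [reflexivity|].
  simpl. rewrite IH, <- Series_plus; auto using ex_series_sum.
Qed.

Lemma sum_Series_le (a : nat -> nat -> R) (b : nat -> R) N :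
  (forall n m, 0 <= a n m) -> (forall n, ex_series (a n)) -> ex_series b ->
  (forall m, sum_f_R0 (fun n => a n m) N <= b m) ->
  sum_f_R0 (fun n => Series (a n)) N <= Series b.
Proof.
  intros a_ge0 a_ex b_ex ab. rewrite sum_Series by exact a_ex.
  apply Series_le; auto. intros m. split; [apply cond_pos_sum; auto | apply ab].
Qed.

(** * The series sum_{q >= 2} q^-s *)

(* The terms q = 0, 1 are dropped: there [Rpower (INR q) (- s)] is 1. *)
Definition zeta_term (s : R) (q : nat) : R :=
  if (q <? 2)%nat then 0 else Rpower (INR q) (- s).

Lemma zeta_term_ge0 s q : 0 <= zeta_term s q.
Proof. unfold zeta_term. destruct (q <? 2)%nat; [lra | left; apply Rpower_gt0]. Qed.

Lemma zeta_term_antitone s t q : 0 <= s <= t -> zeta_term t q <= zeta_term s q.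
Proof.
  intros st. unfold zeta_term. destruct (q <? 2)%nat eqn:q_lt; [lra|].
  apply Nat.ltb_ge, le_INR in q_lt. simpl in q_lt.
  apply Rle_Rpower; lra.
Qed.

Lemma Rpower_bernoulli t h : t <= 0 -> -1 < h -> 1 + t * h <= Rpower (1 + h) t.
Proof.
  intros t_le0 h_gt. unfold Rpower. eapply Rle_trans; [|apply exp_ineq1_le].
  pose proof (ln_le_sub1 (1 + h) ltac:(lra)). nra.
Qed.

(* (x - 1)^(1-s) = x^(1-s) (1 - 1/x)^(1-s), and Bernoulli bounds the second
   factor below by 1 + (s - 1)/x. *)
Lemma Rpower_telescope s x : 1 < s -> 1 < x ->
  (s - 1) * Rpower x (- s) <= Rpower (x - 1) (1 - s) - Rpower x (1 - s).
Proof.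
  intros s_gt1 x_gt1.
  assert (inv_x : 0 < / x < 1).
  { split; [apply Rinv_0_lt_compat; lra|]. rewrite <- Rinv_1. apply Rinv_1_lt_contravar; lra. }
  assert (split_x1 : Rpower (x - 1) (1 - s) = Rpower x (1 - s) * Rpower (1 + - / x) (1 - s)).
  { rewrite Rpower_mult_distr by lra. f_equal. field. lra. }
  assert (split_x : Rpower x (1 - s) = x * Rpower x (- s)).
  { unfold Rminus. rewrite Rpower_plus, Rpower_1; lra. }
  pose proof (Rpower_bernoulli (1 - s) (- / x) ltac:(lra) ltac:(lra)) as bern.
  pose proof (Rpower_gt0 x (- s)).
  rewrite split_x1, split_x.
  set (P := Rpower (1 + - / x) (1 - s)) in *. set (Y := Rpower x (- s)) in *.
  assert (0 <= x * Y * (P - 1 - (s - 1) * / x)).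
  { apply Rmult_le_pos; [nra|]. replace ((s - 1) * / x) with ((1 - s) * - / x) by ring. lra. }
  replace ((s - 1) * Y) with (x * Y * ((s - 1) * / x)) by (field; lra). nra.
Qed.

Lemma zeta_partial_le s N : 1 < s ->
  (s - 1) * sum_f_R0 (zeta_term s) (S N) <= 1 - Rpower (INR (S N)) (1 - s).
Proof.
  intros s_gt1. induction N as [|N IH].
  - simpl. unfold zeta_term, Rpower. simpl. rewrite ln_1, Rmult_0_r, exp_0. lra.
  - rewrite tech5, Rmult_plus_distr_l.
    pose proof (Rpower_telescope s (INR (S (S N))) s_gt1) as step.
    unfold zeta_term at 2. replace (S (S N) <? 2)%nat with false by reflexivity.
    rewrite (S_INR (S N)) in step |- *.
    replace (INR (S N) + 1 - 1) with (INR (S N)) in step by ring.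
    pose proof (lt_0_INR (S N) ltac:(lia)).
    specialize (step ltac:(lra)). lra.
Qed.

Lemma ex_series_zeta_term s : 1 < s -> ex_series (zeta_term s).
Proof.
  intros s_gt1.
  assert (bounded : forall N, sum_f_R0 (zeta_term s) N <= / (s - 1)).
  { intros [|N].
    - simpl. unfold zeta_term. simpl. left. apply Rinv_0_lt_compat. lra.
    - pose proof (zeta_partial_le s N s_gt1). pose proof (Rpower_gt0 (INR (S N)) (1 - s)).
      apply Rmult_le_reg_l with (s - 1); [lra|]. rewrite Rinv_r; lra. }
  destruct (ex_finite_lim_seq_incr (sum_f_R0 (zeta_term s)) (/ (s - 1))) as [l Hl].
  - intros N. simpl. pose proof (zeta_term_ge0 s (S N)). lra.
  - exact bounded.
  - apply ex_series_Reals_1. exists l. apply is_lim_seq_Reals. exact Hl.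
Qed.

Lemma zeta_term_le_geometric b m q : 0 <= b -> (2 <= m)%nat ->
  zeta_term (b * INR m) q <= Rpower 2 (2 * b) * zeta_term (2 * b) q * Rpower 2 (- b) ^ m.
Proof.
  intros b_ge0 m_ge2. unfold zeta_term. destruct (q <? 2)%nat eqn:q_lt; [lra|].
  apply Nat.ltb_ge, le_INR in q_lt. simpl in q_lt.
  apply le_INR in m_ge2. simpl in m_ge2.
  set (t := b * INR m - 2 * b).
  assert (t_ge0 : 0 <= t) by (unfold t; nra).
  assert (lhs : Rpower (INR q) (- (b * INR m))
                = Rpower (INR q) (- (2 * b)) * Rpower (INR q) (- t)).
  { rewrite <- Rpower_plus. f_equal. unfold t. ring. }
  assert (rhs : Rpower 2 (2 * b) * Rpower 2 (- b) ^ m = Rpower 2 (- t)).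
  { rewrite <- Rpower_pow, Rpower_mult, <- Rpower_plus by apply Rpower_gt0.
    f_equal. unfold t. ring. }
  rewrite lhs.
  replace (Rpower 2 (2 * b) * Rpower (INR q) (- (2 * b)) * Rpower 2 (- b) ^ m)
    with (Rpower (INR q) (- (2 * b)) * (Rpower 2 (2 * b) * Rpower 2 (- b) ^ m)) by ring.
  rewrite rhs.
  apply Rmult_le_compat_l; [left; apply Rpower_gt0|].
  rewrite !Rpower_Ropp. apply Rinv_le_contravar; [apply Rpower_gt0|].
  apply Rle_Rpower_l; lra.
Qed.

Definition zeta_geom (b : R) (m : nat) : R :=
  Rpower 2 (2 * b) * Series (zeta_term (2 * b)) * Rpower 2 (- b) ^ m.

Lemma zeta_geom_ge0 b m : 1 / 2 < b -> 0 <= zeta_geom b m.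
Proof.
  intros b_gt. unfold zeta_geom.
  pose proof (Series_ge0 _ (zeta_term_ge0 (2 * b)) (ex_series_zeta_term (2 * b) ltac:(lra))).
  pose proof (pow_le (Rpower 2 (- b)) m (Rlt_le _ _ (Rpower_gt0 2 (- b)))).
  pose proof (Rpower_gt0 2 (2 * b)). apply Rmult_le_pos; [apply Rmult_le_pos|]; lra.
Qed.

Lemma ex_series_zeta_geom b : 0 < b -> ex_series (zeta_geom b).
Proof.
  intros b_pos.
  apply (ex_series_ext
    (fun m => Rpower 2 (- b) ^ m * (Rpower 2 (2 * b) * Series (zeta_term (2 * b))))).
  { intros m. apply Rmult_comm. }
  apply ex_series_scal_r, ex_series_geom.
  rewrite Rabs_pos_eq by (left; apply Rpower_gt0).
  rewrite <- (Rpower_O 2) by lra. apply Rpower_lt; lra.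
Qed.

Lemma Series_zeta_le_geom b m : 1 / 2 < b -> (2 <= m)%nat ->
  Series (zeta_term (b * INR m)) <= zeta_geom b m.
Proof.
  intros b_gt m_ge2. unfold zeta_geom.
  replace (Rpower 2 (2 * b) * Series (zeta_term (2 * b)) * Rpower 2 (- b) ^ m)
    with (Series (zeta_term (2 * b)) * (Rpower 2 (2 * b) * Rpower 2 (- b) ^ m)) by ring.
  rewrite <- Series_scal_r. apply Series_le.
  - intros q. split; [apply zeta_term_ge0|].
    eapply Rle_trans; [apply zeta_term_le_geometric; auto; lra | right; ring].
  - apply ex_series_scal_r, ex_series_zeta_term. lra.
Qed.

(** * The exceptional set *)

Lemma div_x_over_ln_le K b x y : 0 <= b < 1 -> 1 < x -> 0 <= y <= K * Rpower x b ->
  y / (x / ln x) <= K / ((1 - b) / 2) * Rpower x (- ((1 - b) / 2)).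
Proof.
  intros b_bnd x_gt1 y_bnd. set (e := (1 - b) / 2).
  assert (e_pos : 0 < e) by (unfold e; lra).
  assert (ln_pos : 0 < ln x) by (rewrite <- ln_1; apply ln_increasing; lra).
  assert (exps : Rpower x b * Rpower x e / x = Rpower x (- e)).
  { rewrite <- Rpower_plus. rewrite <- (Rpower_1 x) at 2 by lra. unfold Rdiv.
    rewrite <- Rpower_Ropp, <- Rpower_plus. f_equal. unfold e. field. }
  replace (y / (x / ln x)) with (y * ln x / x) by (field; lra).
  apply Rle_trans with (K * Rpower x b * (Rpower x e / e) / x).
  { apply Rmult_le_compat_r; [left; apply Rinv_0_lt_compat; lra|].
    apply Rmult_le_compat; [lra | lra | lra | apply ln_le_Rpower; lra]. }
  right. rewrite <- exps. field. lra.
Qed.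

Lemma little_o_x_over_ln (c : nat -> R) (K b : R) : 0 <= b < 1 ->
  (forall N, (1 <= N)%nat -> 0 <= c N <= K * Rpower (INR N) b) ->
  is_lim (fun x => c (Z.to_nat (Int_part x)) / (x / ln x)) p_infty 0.
Proof.
  intros b_bnd c_bnd. set (e := (1 - b) / 2).
  assert (e_pos : 0 < e) by (unfold e; lra).
  assert (K_ge0 : 0 <= K).
  { destruct (c_bnd 1%nat (le_n 1)) as [H1 H2]. simpl in H2.
    unfold Rpower in H2. rewrite ln_1, Rmult_0_r, exp_0 in H2. lra. }
  set (L := K / e + 1).
  assert (L_pos : 0 < L) by (unfold L; apply Rplus_le_lt_0_compat; [apply Rdiv_le_0_compat|]; lra).
  apply is_lim_spec. intros eps. simpl.
  exists (Rmax 2 (exp (- ln (eps / L) / e))). intros x x_big.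
  assert (x_gt2 : 2 < x) by (eapply Rle_lt_trans; [apply Rmax_l | exact x_big]).
  assert (x_small : Rpower x (- e) < eps / L).
  { apply Rpower_neg_lt; [lra | apply Rdiv_lt_0_compat; [apply cond_pos | lra] |].
    eapply Rle_lt_trans; [apply Rmax_r | exact x_big]. }
  set (N := Z.to_nat (Int_part x)).
  destruct (base_Int_part x) as [floor_le floor_gt].
  assert (HN : INR N = IZR (Int_part x)) by (apply INR_Int_part; lra).
  assert (N_ge1 : (1 <= N)%nat) by (apply INR_le; simpl; lra).
  destruct (c_bnd N N_ge1) as [cN_ge0 cN_le].
  assert (cN_le_x : c N <= K * Rpower x b).
  { eapply Rle_trans; [exact cN_le|]. apply Rmult_le_compat_l; [lra|].
    apply Rle_Rpower_l; [lra | split; [apply lt_0_INR; lia | lra]]. }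
  pose proof (div_x_over_ln_le K b x (c N) b_bnd ltac:(lra) (conj cN_ge0 cN_le_x)) as bound.
  fold e in bound. pose proof (Rpower_gt0 x (- e)).
  assert (ln_pos : 0 < ln x) by (rewrite <- ln_1; apply ln_increasing; lra).
  rewrite Rminus_0_r, Rabs_pos_eq.
  2:{ apply Rdiv_le_0_compat; [lra | apply Rdiv_lt_0_compat; lra]. }
  apply Rle_lt_trans with (L * Rpower x (- e)).
  { eapply Rle_trans; [exact bound|]. apply Rmult_le_compat_r; unfold L; lra. }
  apply Rmult_lt_reg_l with (/ L); [apply Rinv_0_lt_compat; lra|].
  rewrite <- Rmult_assoc, Rinv_l, Rmult_1_l by lra.
  replace (/ L * eps) with (eps / L) by (unfold Rdiv; ring). exact x_small.
Qed.

Definition exceptional (f : nat -> R) (d : R) (n : nat) : bool :=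
  if Rlt_dec (Rpower (INR n) (- d)) (INR n * f n) then true else false.

Lemma count_exceptional_le (f : nat -> R) d N : 0 <= d -> (1 <= N)%nat ->
  (forall n, 0 <= f n) ->
  INR (count_upto (exceptional f d) N) <= Rpower (INR N) d * sum_f_R0 (fun n => INR n * f n) N.
Proof.
  intros d_ge0 N_ge1 f_ge0. rewrite scal_sum. apply count_upto_le_sum.
  - intros n. apply Rmult_le_pos; [apply Rmult_le_pos; [apply pos_INR | auto] | left; apply Rpower_gt0].
  - intros n n_le En. unfold exceptional in En.
    destruct (Rlt_dec _ _) as [above | _]; [|discriminate].
    destruct n as [|n].
    { simpl in above. pose proof (Rpower_gt0 0 (- d)). lra. }
    assert (n_pos : 0 < INR (S n)) by (apply lt_0_INR; lia).
    assert (mono : Rpower (INR (S n)) d <= Rpower (INR N) d).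
    { apply Rle_Rpower_l; [lra | split; [lra | apply le_INR; lia]]. }
    assert (inv : Rpower (INR (S n)) d * Rpower (INR (S n)) (- d) = 1).
    { rewrite <- Rpower_plus, Rplus_opp_r. apply Rpower_O. lra. }
    pose proof (Rpower_gt0 (INR (S n)) d). pose proof (Rpower_gt0 (INR (S n)) (- d)).
    nra.
Qed.

Lemma exceptional_set_of_weighted_bound (f : nat -> R) (K a : R) :
  0 <= a < 1 -> (forall n, 0 <= f n) ->
  (forall N, (1 <= N)%nat -> sum_f_R0 (fun n => INR n * f n) N <= K * Rpower (INR N) a) ->
  exists E : nat -> bool,
    is_lim (fun x => INR (count_upto E (Z.to_nat (Int_part x))) / (x / ln x)) p_infty 0 /\
    (forall eps, 0 < eps -> exists N0 : nat, forall n, (N0 <= n)%nat -> E n = false ->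
       Rabs (f n) <= eps * / INR n).
Proof.
  intros a_bnd f_ge0 weighted_le. set (d := (1 - a) / 2).
  assert (d_pos : 0 < d) by (unfold d; lra).
  exists (exceptional f d). split.
  - apply (little_o_x_over_ln (fun N => INR (count_upto (exceptional f d) N)) K (a + d));
      [unfold d; lra|].
    intros N N_ge1. split; [apply pos_INR|].
    eapply Rle_trans; [apply count_exceptional_le; auto; lra|].
    rewrite Rpower_plus. pose proof (Rpower_gt0 (INR N) d).
    replace (K * (Rpower (INR N) a * Rpower (INR N) d))
      with (Rpower (INR N) d * (K * Rpower (INR N) a)) by ring.
    apply Rmult_le_compat_l; [lra | auto].
  - intros eps eps_pos.
    destruct (INR_archimed 1 (exp (- ln eps / d))) as [N0 N0_big]; [lra|].
    exists N0. intros n n_ge En.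
    assert (n_big : exp (- ln eps / d) < INR n).
    { apply le_INR in n_ge. lra. }
    assert (n_pos : 0 < INR n) by (pose proof (exp_pos (- ln eps / d)); lra).
    unfold exceptional in En. destruct (Rlt_dec _ _) as [_ | below]; [discriminate|].
    assert (small : Rpower (INR n) (- d) < eps) by (apply Rpower_neg_lt; lra).
    rewrite Rabs_pos_eq by auto.
    apply Rmult_le_reg_l with (INR n); [exact n_pos|].
    replace (INR n * (eps * / INR n)) with eps by (field; lra). lra.
Qed.

(** * The divisor bound *)

(* [k mod 0 = k], so [dvdb 0 k] holds only for [k = 0]. *)
Definition dvdb (d k : nat) : bool := Nat.eqb (k mod d) 0.

Module DivisorBound.
Import all_boot zify.
Local Open Scope nat_scope.
Local Set Implicit Arguments.
Local Unset Strict Implicit.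

Definition ndivisors n := size (divisors n).

Lemma ndivisors_mul_le u v : 0 < u -> 0 < v -> ndivisors (u * v) <= ndivisors u * ndivisors v.
Proof.
move=> u0 v0; rewrite /ndivisors -(size_allpairs muln).
apply: uniq_leq_size => [|d]; first exact: divisors_uniq.
rewrite -dvdn_divisors ?muln_gt0 ?u0 ?v0 // => d_uv.
(* d = g * (d / g) with g = gcd(d, u) dividing u and d / g dividing v *)
set g := gcdn d u.
have g0 : 0 < g by rewrite gcdn_gt0 u0 orbT.
have g_d : g %| d := dvdn_gcdl d u.
have g_u : g %| u := dvdn_gcdr d u.
have co : coprime (d %/ g) (u %/ g).
  by rewrite /coprime -(eqn_pmul2l g0) muln_gcdr ![g * _]mulnC !divnK // mul1n.
apply/allpairsP; exists (g, d %/ g); split => /=.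
- by rewrite -dvdn_divisors.
- rewrite -dvdn_divisors // -(Gauss_dvdr _ co) -(dvdn_pmul2l g0) mulnA.
  by rewrite [X in _ %| X * v]mulnC divnK // mulnC divnK.
- by rewrite mulnC divnK.
Qed.

Lemma ndivisors_pfactor_le p e : prime p -> ndivisors (p ^ e) <= e.+1.
Proof.
move=> p_pr; rewrite /ndivisors -(size_iota 0 e.+1) -(size_map (expn p) (iota _ _)).
apply: uniq_leq_size => [|d]; first exact: divisors_uniq.
rewrite -dvdn_divisors ?expn_gt0 ?prime_gt0 //.
by case/(dvdn_pfactor _ _ p_pr) => i le_ie ->; apply: map_f; rewrite mem_iota ltnS.
Qed.

Lemma ndivisors_coprime6_le n : 0 < n -> coprime 6 n -> ndivisors n ^ 9 <= n ^ 4.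
Proof.
elim/ltn_ind: n => n IH n0 co6.
have [n_le1 | n_gt1] := leqP n 1; first by have -> : n = 1 by lia.
(* peel off the least prime p of n: p >= 5 and 2 ^ 9 <= 5 ^ 4 *)
set p := pdiv n; set m := n %/ p.
have p_pr : prime p := pdiv_prime n_gt1.
have nE : n = p * m by rewrite /m mulnC divnK // pdiv_dvd.
have m0 : 0 < m by move: n0; rewrite nE muln_gt0 => /andP[].
have p_ge5 : 5 <= p.
  have cop q : q %| 6 -> coprime q p.
    by move=> q6; apply: (coprime_dvdr (pdiv_dvd n)); apply: coprime_dvdl co6.
  move: (cop 2 isT) (cop 3 isT) p_pr; case: (p) => [|[|[|[|[|]]]]] //.
have m_lt : m < n by rewrite nE -{1}(mul1n m) ltn_pmul2r // (leq_trans _ p_ge5).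
have co6m : coprime 6 m by apply: coprime_dvdr co6; rewrite nE dvdn_mull.
have dm : ndivisors n <= 2 * ndivisors m.
    rewrite nE; apply: (leq_trans (ndivisors_mul_le (prime_gt0 p_pr) m0)).
  by rewrite leq_mul2r (ndivisors_pfactor_le 1 p_pr) orbT.
apply: (@leq_trans ((2 * ndivisors m) ^ 9)); first by rewrite leq_exp2r.
rewrite expnMn nE expnMn; apply: leq_mul; last exact: IH.
by apply: (@leq_trans (5 ^ 4)); rewrite ?leq_exp2r.
Qed.

Lemma expn9_le_pow16 a : a.+1 ^ 9 <= 80 * 16 ^ a.
Proof.
elim: a => [|a IH] //; case: a IH => [|[|a]] IH; try lia.
have step : a.+4 ^ 9 <= 16 * a.+3 ^ 9.
  have h : (3 * a.+4) ^ 9 <= (4 * a.+3) ^ 9 by rewrite leq_exp2r //; lia.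
  rewrite !expnMn in h; rewrite -(@leq_pmul2l (3 ^ 9)) // mulnA.
  apply: (leq_trans h); rewrite leq_mul2r; apply/orP; right; lia.
by apply: (leq_trans step); rewrite [16 ^ _]expnS mulnCA leq_pmul2l.
Qed.

Lemma expn9_le_pow81 b : b.+1 ^ 9 <= 7 * 81 ^ b.
Proof.
elim: b => [|b IH] //; case: b IH => [|b] IH; try lia.
have step : b.+3 ^ 9 <= 81 * b.+2 ^ 9.
  have h : (2 * b.+3) ^ 9 <= (3 * b.+2) ^ 9 by rewrite leq_exp2r //; lia.
  rewrite !expnMn in h; rewrite -(@leq_pmul2l (2 ^ 9)) // mulnA.
  apply: (leq_trans h); rewrite leq_mul2r; apply/orP; right; lia.
by apply: (leq_trans step); rewrite [81 ^ _]expnS mulnCA leq_pmul2l.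
Qed.

(* The 3- and 2-parts of n are handled by expn9_le_pow81 and expn9_le_pow16,
   whence 560 = 7 * 80. *)
Lemma ndivisors_expn9_le n : 0 < n -> ndivisors n ^ 9 <= 560 * n ^ 4.
Proof.
move=> n0.
have [m2 co2 n_eq] := pfactor_coprime (isT : prime 2) n0.
have m20 : 0 < m2 by move: n0; rewrite n_eq muln_gt0 => /andP[].
have [m co3 m2_eq] := pfactor_coprime (isT : prime 3) m20.
have m0 : 0 < m by move: m20; rewrite m2_eq muln_gt0 => /andP[].
set a := logn 2 n in n_eq; set b := logn 3 m2 in m2_eq.
have co6 : coprime 6 m.
  rewrite -[6]/(2 * 3) coprimeMl co3 andbT.
  by apply: coprime_dvdr co2; rewrite m2_eq dvdn_mulr.
have dn : ndivisors n <= ndivisors m * b.+1 * a.+1.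
  rewrite n_eq; apply: (leq_trans (ndivisors_mul_le m20 (expn_gt0 2 a))).
  apply: leq_mul; last exact: ndivisors_pfactor_le.
  rewrite m2_eq; apply: (leq_trans (ndivisors_mul_le m0 (expn_gt0 3 b))).
  exact/leq_mul/ndivisors_pfactor_le.
apply: (@leq_trans ((ndivisors m * b.+1 * a.+1) ^ 9)); first by rewrite leq_exp2r.
have -> : 560 * n ^ 4 = m ^ 4 * (7 * 81 ^ b) * (80 * 16 ^ a).
  rewrite n_eq m2_eq !expnMn -!expnM !(mulnC _ 4) !expnM -[81]/(3 ^ 4) -[16]/(2 ^ 4); lia.
rewrite !expnMn; apply: leq_mul; [apply: leq_mul|].
- exact: ndivisors_coprime6_le.
- exact: expn9_le_pow81.
- exact: expn9_le_pow16.
Qed.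

Lemma count_dvdb_le_ndivisors N k : 0 < k -> count_upto (dvdb^~ k) N <= ndivisors k.
Proof.
move=> k0; rewrite /count_upto /ndivisors.
have -> : forall s : seq nat, List.length s = size s by elim=> //= x s ->.
have -> : forall s : seq nat, List.filter (dvdb^~ k) s = filter (dvdb^~ k) s.
  by elim=> //= x s ->.
have -> : forall i, List.seq i N.+1 = iota i N.+1 by elim: N.+1 => //= j IH i; rewrite IH.
apply: uniq_leq_size => [|d]; first by rewrite filter_uniq // iota_uniq.
rewrite mem_filter -dvdn_divisors // => /andP[/Nat.eqb_eq d_k _]; apply/dvdnP.
case: d d_k => [/= k_eq|d /Nat.Div0.mod_divides[c ->]]; first by rewrite k_eq in k0.
by exists c; rewrite mulnC.
Qed.

Lemma count_dvdb_expn9_le N k : (0 < k)%coq_nat ->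
  (Nat.pow (count_upto (dvdb^~ k) N) 9 <= 560 * Nat.pow k 4)%coq_nat.
Proof.
move=> /ltP k0; apply/leP.
have powE x e : Nat.pow x e = x ^ e by elim: e => //= e ->; rewrite expnS.
rewrite !powE; apply: (leq_trans _ (ndivisors_expn9_le k0)).
by rewrite leq_exp2r // count_dvdb_le_ndivisors.
Qed.

End DivisorBound.

Lemma dvdb_bounds d k : (0 < k)%nat -> dvdb d k = true -> (1 <= d <= k)%nat.
Proof.
  intros k_pos d_k. apply Nat.eqb_eq in d_k. destruct d as [|d].
  - simpl in d_k. lia.
  - apply Nat.Div0.mod_divides in d_k as [c k_eq]. destruct c; lia.
Qed.

Definition C_tau : R := Rpower 560 (1 / 9).

Lemma C_tau_gt0 : 0 < C_tau.
Proof. apply Rpower_gt0. Qed.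

Lemma count_dvdb_le_Rpower N k : (0 < k)%nat ->
  INR (count_upto (fun d => dvdb d k) N) <= C_tau * Rpower (INR k) (4 / 9).
Proof.
  intros k_pos. set (c := count_upto (fun d => dvdb d k) N).
  pose proof (DivisorBound.count_dvdb_expn9_le N k_pos) as bound.
  apply le_INR in bound. rewrite mult_INR, !pow_INR in bound. fold c in bound.
  assert (k_gt0 : 0 < INR k) by (apply lt_0_INR; lia).
  pose proof C_tau_gt0. pose proof (Rpower_gt0 (INR k) (4 / 9)).
  destruct (Nat.eq_dec c 0) as [c0 | c_ne0]; [rewrite c0; simpl; nra|].
  assert (c_gt0 : 0 < INR c) by (apply lt_0_INR; lia).
  assert (root9 : forall x, 0 < x -> Rpower (x ^ 9) (1 / 9) = x).
  { intros x x_pos. rewrite <- Rpower_pow, Rpower_mult by exact x_pos.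
    replace (INR 9 * (1 / 9)) with 1 by (simpl; field). apply Rpower_1. exact x_pos. }
  assert (rhs : C_tau * Rpower (INR k) (4 / 9) = Rpower (560 * INR k ^ 4) (1 / 9)).
  { unfold C_tau. rewrite <- Rpower_mult_distr by (try apply pow_lt; lra).
    rewrite <- (Rpower_pow 4), Rpower_mult by exact k_gt0.
    do 2 f_equal. simpl. field. }
  rewrite <- (root9 (INR c) c_gt0), rhs.
  apply Rle_Rpower_l; [lra | split; [apply pow_lt; lra|]].
  replace (INR 560) with 560 in bound by (simpl; ring). exact bound.
Qed.

Lemma divisor_sum_upto_le N k : (1 <= N)%nat -> (1 <= k)%nat ->
  sum_f_R0 (fun n => if dvdb n k then INR n else 0) N
  <= C_tau * Rpower (INR N) (35 / 36) * Rpower (INR k) (17 / 36).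
Proof.
  intros N_ge1 k_ge1. set (B := Rpower (INR N) (35 / 36) * Rpower (INR k) (1 / 36)).
  assert (B_pos : 0 < B) by (apply Rmult_lt_0_compat; apply Rpower_gt0).
  eapply Rle_trans; [apply (sum_indicator_le_count _ _ B); [lra|] |].
  - intros n n_le n_k. destruct (dvdb_bounds n k ltac:(lia) n_k).
    unfold B. replace (1 / 36) with (1 - 35 / 36) by field.
    apply le_Rpower_interp; [apply lt_0_INR; lia | apply le_INR; lia | apply le_INR; lia | lra].
  - eapply Rle_trans; [apply Rmult_le_compat_l; [lra | apply count_dvdb_le_Rpower; lia]|].
    right. unfold B.
    replace (17 / 36) with (1 / 36 + 4 / 9) by field. rewrite Rpower_plus. ring.
Qed.

(** * Bounding the double sum *)

Lemma pm1_mod_dvdb n q m : (1 <= q ^ m)%nat ->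
  pm1_mod n q m = (dvdb n (q ^ m - 1) || dvdb n (q ^ m + 1))%bool.
Proof.
  intros Q_ge1.
  assert (Zmod_eqb : forall k, Z.eqb (Z.of_nat k mod Z.of_nat n) 0 = dvdb n k).
  { intros k. unfold dvdb. rewrite <- Nat2Z.inj_mod.
    destruct (Nat.eqb_spec (k mod n) 0) as [E | E]; [rewrite E; reflexivity | apply Z.eqb_neq; lia]. }
  unfold pm1_mod. rewrite <- !Zmod_eqb, Nat2Z.inj_sub, Nat2Z.inj_add, Nat2Z.inj_pow by exact Q_ge1.
  reflexivity.
Qed.

Lemma prime_ge2 q : prime (Z.of_nat q) -> (2 <= q)%nat.
Proof. intros q_pr. apply prime_ge_2 in q_pr. lia. Qed.

Lemma inner_term_ge0 n m q : 0 <= inner_term n m q.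
Proof.
  unfold inner_term. destruct (prime_dec (Z.of_nat q)) as [q_pr | _]; [|lra].
  destruct (pm1_mod n q m); [|lra].
  left. apply Rinv_0_lt_compat, pow_lt, lt_0_INR. pose proof (prime_ge2 q q_pr). lia.
Qed.

Lemma inner_term_le_zeta n m q : inner_term n m q <= zeta_term (INR m) q.
Proof.
  unfold inner_term. destruct (prime_dec (Z.of_nat q)) as [q_pr | _]; [|apply zeta_term_ge0].
  destruct (pm1_mod n q m); [|apply zeta_term_ge0].
  pose proof (prime_ge2 q q_pr) as q_ge2. unfold zeta_term.
  replace (q <? 2)%nat with false by (symmetry; apply Nat.ltb_ge; exact q_ge2).
  rewrite Rpower_Ropp, Rpower_pow by (apply lt_0_INR; lia). lra.
Qed.

Lemma weighted_inner_term_le n m q : prime (Z.of_nat q) ->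
  INR n * inner_term n m q
  <= / INR q ^ m * ((if dvdb n (q ^ m - 1) then INR n else 0)
                    + (if dvdb n (q ^ m + 1) then INR n else 0)).
Proof.
  intros q_pr. pose proof (prime_ge2 q q_pr) as q_ge2.
  assert (Q_ge1 : (1 <= q ^ m)%nat) by (apply Nat.le_succ_l, Nat.neq_0_lt_0, Nat.pow_nonzero; lia).
  assert (Qinv_pos : 0 < / INR q ^ m) by (apply Rinv_0_lt_compat, pow_lt, lt_0_INR; lia).
  unfold inner_term. destruct (prime_dec (Z.of_nat q)) as [_ | not_pr]; [|contradiction].
  rewrite pm1_mod_dvdb by exact Q_ge1. pose proof (pos_INR n).
  destruct (dvdb n (q ^ m - 1)), (dvdb n (q ^ m + 1)); simpl; nra.
Qed.

Lemma inner_term_nonprime n m q : ~ prime (Z.of_nat q) -> inner_term n m q = 0.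
Proof. intros q_npr. unfold inner_term. destruct (prime_dec _); [contradiction | reflexivity]. Qed.

Lemma zeta_term_pow q m : (2 <= q)%nat ->
  zeta_term (19 / 36 * INR m) q = / INR q ^ m * Rpower (INR q ^ m) (17 / 36).
Proof.
  intros q_ge2. assert (q_pos : 0 < INR q) by (apply lt_0_INR; lia).
  unfold zeta_term. replace (q <? 2)%nat with false by (symmetry; apply Nat.ltb_ge; lia).
  rewrite <- (Rpower_pow m (INR q) q_pos), Rpower_mult, <- Rpower_Ropp, <- Rpower_plus.
  f_equal. field.
Qed.

Lemma divisor_sum_upto_le_pow N k Q : (1 <= N)%nat -> (1 <= k)%nat -> INR k <= 2 * Q ->
  sum_f_R0 (fun n => if dvdb n k then INR n else 0) N
  <= 2 * C_tau * Rpower (INR N) (35 / 36) * Rpower Q (17 / 36).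
Proof.
  intros N_ge1 k_ge1 k_le. assert (k_pos : 0 < INR k) by (apply lt_0_INR; lia).
  eapply Rle_trans; [apply divisor_sum_upto_le; auto|].
  assert (Rpower (INR k) (17 / 36) <= 2 * Rpower Q (17 / 36)).
  { eapply Rle_trans; [apply Rle_Rpower_l; [lra | split; [exact k_pos | exact k_le]]|].
    rewrite <- Rpower_mult_distr by lra. apply Rmult_le_compat_r; [left; apply Rpower_gt0|].
    rewrite <- (Rpower_1 2) at 2 by lra. apply Rle_Rpower; lra. }
  pose proof C_tau_gt0. pose proof (Rpower_gt0 (INR N) (35 / 36)).
  replace (2 * C_tau * Rpower (INR N) (35 / 36) * Rpower Q (17 / 36))
    with (C_tau * Rpower (INR N) (35 / 36) * (2 * Rpower Q (17 / 36))) by ring.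
  apply Rmult_le_compat_l; [nra | assumption].
Qed.

Lemma weighted_inner_sum_le N m q : (1 <= N)%nat -> (2 <= m)%nat ->
  sum_f_R0 (fun n => INR n * inner_term n m q) N
  <= 4 * C_tau * Rpower (INR N) (35 / 36) * zeta_term (19 / 36 * INR m) q.
Proof.
  intros N_ge1 m_ge2.
  pose proof C_tau_gt0. pose proof (Rpower_gt0 (INR N) (35 / 36)).
  destruct (prime_dec (Z.of_nat q)) as [q_pr | q_npr].
  2:{ rewrite (sum_eq _ (fun _ => 0)), sum_cte.
      - rewrite Rmult_0_l. pose proof (zeta_term_ge0 (19 / 36 * INR m) q).
        repeat apply Rmult_le_pos; lra.
      - intros n _. rewrite inner_term_nonprime by exact q_npr. ring. }
  pose proof (prime_ge2 q q_pr) as q_ge2.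
  assert (Q_ge4 : (4 <= q ^ m)%nat).
  { change 4%nat with (2 ^ 2)%nat. apply Nat.le_trans with (q ^ 2)%nat;
      [apply Nat.pow_le_mono_l | apply Nat.pow_le_mono_r]; lia. }
  pose proof (le_INR _ _ Q_ge4) as Q_ge4_R. rewrite pow_INR in Q_ge4_R.
  replace (INR 4) with 4 in Q_ge4_R by (simpl; ring).
  rewrite zeta_term_pow by exact q_ge2.
  eapply Rle_trans; [apply sum_Rle; intros n _; apply weighted_inner_term_le, q_pr|].
  rewrite (sum_eq _ (fun n => (if dvdb n (q ^ m - 1) then INR n else 0) * / INR q ^ m
                              + (if dvdb n (q ^ m + 1) then INR n else 0) * / INR q ^ m))
    by (intros; ring).
  rewrite sum_plus, <- !scal_sum.
  pose proof (divisor_sum_upto_le_pow N (q ^ m - 1) (INR q ^ m) N_ge1 ltac:(lia)) as D1.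
  pose proof (divisor_sum_upto_le_pow N (q ^ m + 1) (INR q ^ m) N_ge1 ltac:(lia)) as D2.
  rewrite minus_INR, pow_INR in D1 by lia. rewrite plus_INR, pow_INR in D2.
  simpl INR in D1, D2. specialize (D1 ltac:(lra)). specialize (D2 ltac:(lra)).
  assert (0 < / INR q ^ m) by (apply Rinv_0_lt_compat; lra).
  set (Q := INR q ^ m) in *.
  replace (4 * C_tau * Rpower (INR N) (35 / 36) * (/ Q * Rpower Q (17 / 36)))
    with (/ Q * (2 * C_tau * Rpower (INR N) (35 / 36) * Rpower Q (17 / 36)
                 + 2 * C_tau * Rpower (INR N) (35 / 36) * Rpower Q (17 / 36))) by ring.
  rewrite <- Rmult_plus_distr_l. apply Rmult_le_compat_l; lra.
Qed.

Definition ssum_term (n m : nat) : R :=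
  if (m <? 2)%nat then 0 else / INR m * Series (inner_term n m).

Lemma ex_series_inner_term n m : (2 <= m)%nat -> ex_series (inner_term n m).
Proof.
  intros m_ge2. apply (ex_series_le_ge0 _ (zeta_term (INR m))).
  - intros q. split; [apply inner_term_ge0 | apply inner_term_le_zeta].
  - apply ex_series_zeta_term. apply le_INR in m_ge2. simpl in m_ge2. lra.
Qed.

Lemma Series_inner_term_le n m : (2 <= m)%nat ->
  Series (inner_term n m) <= zeta_geom (19 / 36) m.
Proof.
  intros m_ge2. pose proof (le_INR _ _ m_ge2) as m_ge2_R. simpl in m_ge2_R.
  eapply Rle_trans; [|apply Series_zeta_le_geom; auto; lra].
  apply Series_le; [|apply ex_series_zeta_term; nra].
  intros q. split; [apply inner_term_ge0|].
  eapply Rle_trans; [apply inner_term_le_zeta | apply zeta_term_antitone; nra].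
Qed.

Lemma ssum_term_bounds n m : 0 <= ssum_term n m <= zeta_geom (19 / 36) m.
Proof.
  unfold ssum_term. destruct (m <? 2)%nat eqn:m_lt.
  { split; [lra | apply zeta_geom_ge0; lra]. }
  apply Nat.ltb_ge in m_lt.
  pose proof (Series_ge0 _ (inner_term_ge0 n m) (ex_series_inner_term n m m_lt)).
  pose proof (Series_inner_term_le n m m_lt).
  pose proof (Rinv_INR_bounds m ltac:(lia)) as inv_m.
  split; nra.
Qed.

Lemma ex_series_ssum_term n : ex_series (ssum_term n).
Proof.
  apply (ex_series_le_ge0 _ (zeta_geom (19 / 36))); [apply ssum_term_bounds|].
  apply ex_series_zeta_geom. lra.
Qed.

Lemma Ssum_ge0 n : 0 <= Ssum n.
Proof.
  apply Series_ge0; [|apply ex_series_ssum_term].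
  intros m. apply (ssum_term_bounds n m).
Qed.

Lemma weighted_ssum_term_le N m : (1 <= N)%nat ->
  sum_f_R0 (fun n => INR n * ssum_term n m) N
  <= 4 * C_tau * Rpower (INR N) (35 / 36) * zeta_geom (19 / 36) m.
Proof.
  intros N_ge1. set (K := 4 * C_tau * Rpower (INR N) (35 / 36)).
  assert (K_pos : 0 < K).
  { pose proof C_tau_gt0. pose proof (Rpower_gt0 (INR N) (35 / 36)). unfold K. nra. }
  pose proof (zeta_geom_ge0 (19 / 36) m ltac:(lra)).
  unfold ssum_term. destruct (m <? 2)%nat eqn:m_lt.
  { rewrite (sum_eq _ (fun _ => 0)) by (intros; ring). rewrite sum_cte. nra. }
  apply Nat.ltb_ge in m_lt. pose proof (le_INR _ _ m_lt) as m_ge2. simpl in m_ge2.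
  pose proof (Rinv_INR_bounds m ltac:(lia)) as inv_m.
  rewrite (sum_eq _ (fun n => Series (fun q => INR n * inner_term n m q) * / INR m)).
  2:{ intros n _. rewrite Series_scal_l. ring. }
  rewrite <- scal_sum, <- (Rmult_1_l (K * _)).
  apply Rmult_le_compat; [lra | | lra |].
  - apply cond_pos_sum. intros n. apply Series_ge0.
    + intros q. apply Rmult_le_pos; [apply pos_INR | apply inner_term_ge0].
    + apply ex_series_Rmult_l, ex_series_inner_term, m_lt.
  - eapply Rle_trans with (Series (fun q => K * zeta_term (19 / 36 * INR m) q)).
    + apply sum_Series_le.
      * intros n q. apply Rmult_le_pos; [apply pos_INR | apply inner_term_ge0].
      * intros n. apply ex_series_Rmult_l, ex_series_inner_term, m_lt.
      * apply ex_series_Rmult_l, ex_series_zeta_term. nra.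
      * intros q. apply weighted_inner_sum_le; auto.
    + rewrite Series_scal_l. apply Rmult_le_compat_l; [lra|].
      apply Series_zeta_le_geom; auto. lra.
Qed.

Lemma weighted_Ssum_le N : (1 <= N)%nat ->
  sum_f_R0 (fun n => INR n * Ssum n) N
  <= 4 * C_tau * Series (zeta_geom (19 / 36)) * Rpower (INR N) (35 / 36).
Proof.
  intros N_ge1. set (K := 4 * C_tau * Rpower (INR N) (35 / 36)).
  replace (4 * C_tau * Series (zeta_geom (19 / 36)) * Rpower (INR N) (35 / 36))
    with (Series (fun m => K * zeta_geom (19 / 36) m)) by (rewrite Series_scal_l; unfold K; ring).
  rewrite (sum_eq _ (fun n => Series (fun m => INR n * ssum_term n m))).
  2:{ intros n _. rewrite Series_scal_l. reflexivity. }
  apply sum_Series_le.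
  - intros n m. apply Rmult_le_pos; [apply pos_INR | apply ssum_term_bounds].
  - intros n. apply ex_series_Rmult_l, ex_series_ssum_term.
  - apply ex_series_Rmult_l, ex_series_zeta_geom. lra.
  - intros m. apply weighted_ssum_term_le, N_ge1.
Qed.

Theorem proposition1 :
  exists E : nat -> bool,
    is_lim (fun x : R => INR (count_upto E (Z.to_nat (Int_part x))) / (x / ln x))
           p_infty 0 /\
    (forall eps : R, 0 < eps ->
       exists N : nat, forall n : nat, (N <= n)%nat -> E n = false ->
         Rabs (Ssum n) <= eps * / INR n).
Proof.
  apply (exceptional_set_of_weighted_bound Ssum
           (4 * C_tau * Series (zeta_geom (19 / 36))) (35 / 36)).
  - lra.
  - exact Ssum_ge0.
  - exact weighted_Ssum_le.
Qed.
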